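(* Let $n\ge2$. The permutation representation $\rho_2^{\mathbb{C}}$ of $S_n$ does not unite conjugacy classes: if $\sigma,\tau\in S_n$ and $\rho_2^{\mathbb{C}}(\sigma)$ is similar to $\rho_2^{\mathbb{C}}(\tau)$ in $GL(n(n-1),\mathbb{C})$, then $\sigma$ and $\tau$ are conjugate in $S_n$.
   Context: For $1\le k\le n$, $\rho_k^{\mathbb{F}}$ denotes the permutation representation over the field $\mathbb{F}$ of $S_n$ arising from its action on ordered $k$-tuples $(i_1,\dots,i_k)$ of distinct elements of $\{1,\dots,n\}$, given by $\pi\cdot(i_1,\dots,i_k)=(\pi(i_1),\dots,\pi(i_k))$. A representation $T$ of $G$ unites conjugacy classes if there are non-conjugate $\sigma,\tau\in G$ with $T(\sigma),T(\tau)$ similar matrices. *)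

From mathcomp Require Import all_boot all_order all_algebra all_fingroup.
From mathcomp Require Import complex Rstruct.
Set Implicit Arguments. Unset Strict Implicit. Unset Printing Implicit Defensive.
Import GRing.Theory.
Local Open Scope ring_scope.

Definition Cplx : fieldType := (Rdefinitions.R)[i].

Definition dpairs (n : nat) : finType := {x : 'I_n * 'I_n | x.1 != x.2}.

Definition dpair_act (n : nat) (pi : 'S_n) (x : dpairs n) : dpairs n :=
  exist (fun y : 'I_n * 'I_n => y.1 != y.2) (pi (sval x).1, pi (sval x).2)
    (match x as x0 return (pi (sval x0).1 != pi (sval x0).2) with
     | exist y Hy => (contra (fun e => introT eqP (perm_inj (elimT eqP e)))) Hy
     end).

(* rho_2^F(pi): the permutation matrix of the action on distinct pairs,
   indexed by 'I_#|dpairs n| via the enumeration of dpairs n: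
   rho(pi) e_x = e_{pi . x}. *)
Definition rho2 (F : fieldType) (n : nat) (pi : 'S_n) : 'M[F]_#|dpairs n| :=
  \matrix_(a, b) ((enum_val a == dpair_act pi (enum_val b)) : bool)%:R.

Definition mx_similar (F : fieldType) (m : nat) (A B : 'M[F]_m) : Prop :=
  exists2 P : 'M[F]_m, P \in unitmx & A *m P = P *m B.

From mathcomp Require Import all_boot all_order all_algebra all_fingroup.
From mathcomp Require Import complex Rstruct.
From mathcomp Require Import zify.
Set Implicit Arguments. Unset Strict Implicit. Unset Printing Implicit Defensive.

(* The trace of rho_2(pi) counts ordered pairs of distinct fixed points of
   pi, i.e. it is f (f - 1) where f is the number of fixed points of pi.
   Similar matrices have equal traces of all powers, so f_k (f_k - 1) agrees
   for sigma and tau, f_k counting the fixed points of the k-th power.  This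
   pins down f_k unless f_k is 0 or 1.  For the least m with f_m >= 2, no
   earlier power of either permutation has two fixed points, so the points
   fixed by the m-th power but not by the permutation itself lie in m-cycles
   and m divides f_m - f_1 for both; this rules out f_1 = 0 for one and
   f_1 = 1 for the other.  Applied to powers, all f_k agree.  The numbers f_k
   determine how many cycles of each length there are, and matching cycles of
   equal length one by one yields a conjugating permutation. *)

Lemma mul_pred_inj a b : 1 < a -> a * a.-1 = b * b.-1 -> a = b.
Proof. nia. Qed.

Section CycleType.

Variable T : finType.
Implicit Types (s t : {perm T}) (A B O : {set T}) (x y : T).

Lemma iter_mod_order s k x : iter k s x = iter (k %% fingraph.order s x) s x.
Proof.
rewrite {1}(divn_eq k (fingraph.order s x)) addnC iterD; congr (iter _ _ _).
elim: (k %/ _) => //= q IHq.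
by rewrite mulSn iterD IHq iter_order //; apply: perm_inj.
Qed.

Lemma iter_eq_dvdn s k x : (iter k s x == x) = (fingraph.order s x %| k).
Proof.
have lt_mod := ltn_pmod k (fingraph.order_gt0 s x).
by rewrite iter_mod_order /dvdn -[in RHS](findex_iter lt_mod) findex_eq0 eq_sym.
Qed.

Lemma order_fconnect s x y :
  fconnect s x y -> fingraph.order s y = fingraph.order s x.
Proof.
move=> xy; apply: eq_card => z.
by rewrite /in_mem /= (same_connect (fconnect_sym perm_inj) xy).
Qed.

Lemma fclosed_orbit s x : fclosed s [set y | fconnect s x y].
Proof.
by move=> y _ /eqP <-; rewrite !inE -same_fconnect1_r //; apply: perm_inj.
Qed.

Lemma fclosedD s A B : fclosed s A -> fclosed s B -> fclosed s (A :\: B).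
Proof. by move=> clA clB y z syz; rewrite !inE (clA _ _ syz) (clB _ _ syz). Qed.

Definition nfix s A k := #|A :&: [set x | iter k s x == x]|.

Lemma nfix0 s A : nfix s A 0 = #|A|.
Proof. by apply: eq_card => x; rewrite !inE eqxx andbT. Qed.

Lemma nfixX s A k j : nfix (s ^+ k)%g A j = nfix s A (k * j).
Proof. by apply: eq_card => x; rewrite !inE -!permX expgM. Qed.

Lemma nfixS s A B k : A \subset B -> nfix s A k <= nfix s B k.
Proof. by move=> AB; apply/subset_leq_card/setSI. Qed.

Lemma nfix_setD s A O k :
  O \subset A -> nfix s (A :\: O) k = nfix s A k - nfix s O k.
Proof.
by move=> OA; rewrite /nfix setIDAC cardsD setIAC (setIidPr OA).
Qed.

Lemma nfix_orbit s x k :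
  nfix s [set y | fconnect s x y] k =
  if fingraph.order s x %| k then fingraph.order s x else 0.
Proof.
case: ifP => dvd_k.
  rewrite /nfix (setIidPl _); first by apply: eq_card => y; rewrite inE.
  by apply/subsetP => y; rewrite !inE iter_eq_dvdn => /order_fconnect ->.
apply: eq_card0 => y; rewrite !inE iter_eq_dvdn.
by apply/andP => -[/order_fconnect ->]; rewrite dvd_k.
Qed.

(* Under the hypothesis, the points fixed by s^m but not by s lie in cycles of
   length exactly m. *)
Lemma dvdn_nfix_sub s m :
  0 < m -> (forall j, 0 < j < m -> nfix s setT j <= 1) ->
  m %| nfix s setT m - nfix s setT 1.
Proof.
move=> m_gt0 small; set Fm := [set x | iter m s x == x].
have F1m : [set x | iter 1 s x == x] \subset Fm.
  by apply/subsetP => x; rewrite !inE !iter_eq_dvdn => /dvdn_trans; apply.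
rewrite /nfix !setTI -(setIidPr F1m) -cardsD.
rewrite -(@fcard_order_set _ s perm_inj m (mem (Fm :\: _))).
- exact: dvdn_mull.
- apply/subsetP => x; rewrite !inE !iter_eq_dvdn => /andP[not_dvd1 dvd_m].
  rewrite eqn_leq dvdn_leq //= leqNgt; apply/negP => lt_m.
  have ord_gt0 := fingraph.order_gt0 s x.
  have := small _ (introT andP (conj ord_gt0 lt_m)).
  have := nfixS s (fingraph.order s x) (subsetT [set y | fconnect s x y]).
  rewrite nfix_orbit dvdnn; move: not_dvd1; rewrite dvdn1; lia.
- by move=> x y /eqP <-; rewrite !inE -!iterSr !iterS !(inj_eq perm_inj).
Qed.

Lemma nfix_order s : nfix s setT #[s]%g = #|T|.
Proof. by apply: eq_card => x; rewrite !inE -permX expg_order perm1 eqxx. Qed.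

(* The hypothesis only determines n(n-1) from the number n of fixed points,
   which cannot tell 0 from 1: this is the case to rule out. *)
Lemma nfix1_eq_of_pairs s t : 1 < #|T| ->
  (forall k, nfix s setT k * (nfix s setT k).-1 =
             nfix t setT k * (nfix t setT k).-1) ->
  nfix s setT 1 = nfix t setT 1.
Proof.
move=> nT E.
have eq_big j : 1 < nfix s setT j \/ 1 < nfix t setT j ->
    nfix s setT j = nfix t setT j.
  by case=> lt1; [|apply/esym]; apply: mul_pred_inj lt1 _; rewrite E.
apply/eqP; apply: contraT => ne1.
have small1 : nfix s setT 1 <= 1 /\ nfix t setT 1 <= 1.
  by split; rewrite leqNgt; apply: contra ne1 => lt1; apply/eqP/eq_big; tauto.
have /ex_minnP[m /andP[m_gt0 big_m] min_m] :
    exists m, (0 < m) && (1 < nfix s setT m).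
  by exists #[s]%g; rewrite order_gt0 nfix_order.
have small j : 0 < j < m -> nfix s setT j <= 1 /\ nfix t setT j <= 1.
  move=> /andP[j_gt0 lt_jm]; have sj : nfix s setT j <= 1.
    rewrite leqNgt; apply: contraTN lt_jm => lt1.
    by rewrite -leqNgt min_m ?j_gt0.
  split=> //; rewrite leqNgt; apply/negP => lt1.
  by move: sj; rewrite eq_big; lia.
have ds := dvdn_nfix_sub m_gt0 (fun j hj => proj1 (small j hj)).
have dt := dvdn_nfix_sub m_gt0 (fun j hj => proj2 (small j hj)).
rewrite -(eq_big m (or_introl big_m)) in dt.
have : m %| 1.
  move: ds dt; have [[-> ->]|[-> ->]] :
      nfix s setT 1 = 0 /\ nfix t setT 1 = 1 \/
      nfix s setT 1 = 1 /\ nfix t setT 1 = 0 by move: ne1 small1; lia.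
  - by move=> ds dt; have := dvdn_sub ds dt; rewrite (_ : _ - _ = 1) //; lia.
  - by move=> ds dt; have := dvdn_sub dt ds; rewrite (_ : _ - _ = 1) //; lia.
by rewrite dvdn1 => /eqP m1; move: big_m; rewrite m1; lia.
Qed.

Lemma nfix_eq_of_pairs s t : 1 < #|T| ->
  (forall k, nfix s setT k * (nfix s setT k).-1 =
             nfix t setT k * (nfix t setT k).-1) ->
  forall k, nfix s setT k = nfix t setT k.
Proof.
move=> nT E k; rewrite -[k]muln1 -!nfixX.
by apply: nfix1_eq_of_pairs => // j; rewrite !nfixX.
Qed.

Lemma exists_order_match s t A B x0 : (forall k, nfix s A k = nfix t B k) ->
  x0 \in A -> {in A, forall x, fingraph.order s x0 <= fingraph.order s x} ->
  exists2 y0, y0 \in B & fingraph.order t y0 = fingraph.order s x0.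
Proof.
move=> E x0A min_x0.
have /card_gt0P[y0] : 0 < nfix t B (fingraph.order s x0).
  by rewrite -E; apply/card_gt0P; exists x0; rewrite !inE x0A iter_eq_dvdn /=.
rewrite !inE iter_eq_dvdn => /andP[y0B /dvdn_leq le_d]; exists y0 => //.
have /card_gt0P[x] : 0 < nfix s A (fingraph.order t y0).
  by rewrite E; apply/card_gt0P; exists y0; rewrite !inE y0B iter_eq_dvdn /=.
rewrite !inE iter_eq_dvdn => /andP[xA /dvdn_leq le_e].
apply/eqP; rewrite eqn_leq le_d ?fingraph.order_gt0 //=.
exact: leq_trans (min_x0 x xA) (le_e (fingraph.order_gt0 t y0)).
Qed.

Definition orbit_map s t x0 y0 x := iter (findex s x0 x) t y0.

Lemma orbit_map_iter s t x0 y0 m :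
  fingraph.order t y0 = fingraph.order s x0 ->
  orbit_map s t x0 y0 (iter m s x0) = iter m t y0.
Proof.
move=> same_ord; rewrite /orbit_map (iter_mod_order s m x0) findex_iter.
  by rewrite [RHS]iter_mod_order same_ord.
by rewrite ltn_pmod // fingraph.order_gt0.
Qed.

Lemma orbit_map_intertwines s t x0 y0 :
  fingraph.order t y0 = fingraph.order s x0 ->
  orbit_map s t x0 y0 @: [set x | fconnect s x0 x] =
    [set y | fconnect t y0 y] /\
  {in [set x | fconnect s x0 x],
     forall x, orbit_map s t x0 y0 (s x) = t (orbit_map s t x0 y0 x)}.
Proof.
move=> same_ord; split.
  apply/setP => y; rewrite inE; apply/imsetP/idP => [[x]|/iter_findex <-].
    by rewrite inE => /iter_findex <- ->; rewrite orbit_map_iter ?fconnect_iter.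
  exists (iter (findex t y0 y) s x0).
    by rewrite inE fconnect_iter.
  by rewrite orbit_map_iter.
by move=> x; rewrite inE => /iter_findex <-; rewrite -iterS !orbit_map_iter.
Qed.

(* Match an orbit of minimal length in A with an orbit of the same length in
   B, then recurse on the complements. *)
Lemma intertwiner_of_nfix s t A B : fclosed s A -> fclosed t B ->
  (forall k, nfix s A k = nfix t B k) ->
  exists h : T -> T, h @: A = B /\ {in A, forall x, h (s x) = t (h x)}.
Proof.
have [N] := ubnP #|A|; elim: N A B => // N IHN A B ltAN clA clB E.
have [A0|[x1 x1A]] := set_0Vmem A.
  have B0 : B = set0 by apply/cards0_eq; rewrite -(nfix0 t) -E nfix0 A0 cards0.
  by exists id; rewrite A0 B0 imset0; split=> // x; rewrite inE.
have [x0 x0A min_x0] := arg_minnP (fingraph.order s) x1A.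
have [y0 y0B same_ord] := exists_order_match E x0A min_x0.
set O := [set x | fconnect s x0 x]; set O' := [set y | fconnect t y0 y].
have OA : O \subset A.
  by apply/subsetP => x; rewrite inE => /(closed_connect clA) <-.
have OB : O' \subset B.
  by apply/subsetP => y; rewrite inE => /(closed_connect clB) <-.
have [h' [h'AB h'C]] : exists h' : T -> T, h' @: (A :\: O) = B :\: O' /\
    {in A :\: O, forall x, h' (s x) = t (h' x)}.
  apply: IHN.
  - rewrite -ltnS; apply: leq_trans ltAN; apply: proper_card; apply/properP.
    by split; [exact: subsetDl | exists x0; rewrite ?inE ?connect0].
  - by apply: fclosedD => //; apply: fclosed_orbit.
  - by apply: fclosedD => //; apply: fclosed_orbit.
  - by move=> k; rewrite !nfix_setD // !nfix_orbit same_ord E.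
have [hOO' hOC] := orbit_map_intertwines same_ord; rewrite -/O -/O' in hOO' hOC.
exists (fun x => if x \in O then orbit_map s t x0 y0 x else h' x); split.
  rewrite -(setID A O) (setIidPr OA) imsetU -(setID B O') (setIidPr OB).
  congr (_ :|: _); [rewrite -hOO' | rewrite -h'AB]; apply: eq_in_imset => x.
    by move=> ->.
  by rewrite inE => /andP[/negbTE ->].
move=> x xA; have := @fclosed_orbit s x0 x (s x) (eqxx _); rewrite -/O.
case: (boolP (x \in O)) => [xO <-|xO <-]; rewrite ?xO; first exact: hOC.
by apply: h'C; rewrite inE xO.
Qed.

Lemma conj_of_nfix s t :
  (forall k, nfix s setT k = nfix t setT k) ->
  exists g : {perm T}, t = (s ^ g)%g.
Proof.
move=> E; have clT u : fclosed u [set: T] by move=> x y _; rewrite !inE.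
have [h [hT hC]] := intertwiner_of_nfix (clT s) (clT t) E.
have /imset_injP h_inj : #|h @: setT| == #|[set: T]| by rewrite hT.
have {}h_inj : injective h by move=> x y; apply: h_inj; rewrite inE.
pose g := perm h_inj; exists g; apply/permP => x.
by rewrite -(permKV g x) permJ !permE hC ?inE.
Qed.

End CycleType.

Import GRing.Theory Num.Theory.
Local Open Scope ring_scope.

Section Similarity.
Variables (F : fieldType) (m : nat).
Implicit Types A B : 'M[F]_m.

Lemma mx_similarX A B k : mx_similar A B -> mx_similar (A ^+ k) (B ^+ k).
Proof.
case=> P Pu AP; exists P => //; rewrite !mulmxE in AP *.
elim: k => [|k IHk]; first by rewrite !expr0 mul1r mulr1.
by rewrite !exprS -mulrA IHk !mulrA AP.
Qed.

Lemma mx_similar_trace A B : mx_similar A B -> \tr A = \tr B.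
Proof.
case=> P Pu AP; have -> : A = P *m B *m invmx P by rewrite -AP mulmxK.
by rewrite mxtrace_mulC mulmxA mulVmx ?mul1mx.
Qed.

End Similarity.

Section PairRepresentation.
Variables (F : fieldType) (n : nat).
Implicit Types (p q : 'S_n) (x : dpairs n).

Lemma dpair_act1 x : dpair_act 1%g x = x.
Proof. by apply: val_inj; rewrite /= !perm1; case: (sval x). Qed.

Lemma dpair_actM p q x : dpair_act p (dpair_act q x) = dpair_act (q * p)%g x.
Proof. by apply: val_inj; rewrite /= !permM. Qed.

Lemma rho2_1 : rho2 F (1%g : 'S_n) = 1.
Proof.
by apply/matrixP => a b; rewrite !mxE dpair_act1 (inj_eq enum_val_inj).
Qed.

Lemma rho2M p q : rho2 F p * rho2 F q = rho2 F (q * p)%g.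
Proof.
apply/matrixP => a b; rewrite -mulmxE !mxE.
rewrite (bigD1 (enum_rank (dpair_act q (enum_val b)))) //= big1 ?addr0.
  by rewrite !mxE enum_rankK eqxx mulr1 dpair_actM.
move=> c /negbTE ne_c; rewrite !mxE.
suff -> : (enum_val c == dpair_act q (enum_val b)) = false by rewrite mulr0.
by apply: contraFF ne_c => /eqP <-; rewrite enum_valK.
Qed.

Lemma rho2X p k : rho2 F (p ^+ k)%g = rho2 F p ^+ k.
Proof.
elim: k => [|k IHk]; first by rewrite expg0 expr0 rho2_1.
by rewrite expgSr -rho2M IHk exprS.
Qed.

Lemma tr_rho2 p : \tr (rho2 F p) = #|[set x | dpair_act p x == x]|%:R.
Proof.
rewrite /mxtrace (reindex enum_rank) /=; last first.
  by exists enum_val => x _; rewrite ?enum_valK ?enum_rankK.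
under eq_bigr do rewrite mxE enum_rankK eq_sym.
rewrite -natr_sum -sum1_card [in RHS]big_mkcond; congr _%:R.
by apply: eq_bigr => x _; rewrite inE; case: eqP.
Qed.

End PairRepresentation.

Lemma card_fixed_dpairs n (p : 'S_n) :
  #|[set x : dpairs n | dpair_act p x == x]| =
  (#|[set i | p i == i]| * #|[set i | p i == i]|.-1)%N.
Proof.
set Fp := [set i | p i == i]; set D := [set (i, i) | i in Fp].
have inD i j : ((i, j) \in D) = (i == j) && (i \in Fp).
  apply/imsetP/andP => [[k kF [-> ->]]|[/eqP -> jF]]; first by rewrite eqxx.
  by exists j.
have -> : #|[set x : dpairs n | dpair_act p x == x]| = #|setX Fp Fp :\: D|.
  rewrite -(card_imset _ val_inj); apply: eq_card => -[i j].
  rewrite !inE inD /=; apply/imsetP/idP.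
    case=> -[[a b] ab]; rewrite inE => /eqP/(congr1 val) [pa pb] [-> ->].
    by rewrite (negbTE ab) pa pb !eqxx.
  case/and3P=> not_diag pi pj.
  have ij : i != j by apply: contraNneq not_diag => <-; rewrite eqxx inE pi.
  exists (exist _ (i, j) ij) => //; rewrite inE.
  by apply/eqP/val_inj; rewrite /= (eqP pi) (eqP pj).
have DX : D \subset setX Fp Fp.
  by apply/subsetP => _ /imsetP[i iF ->]; rewrite inE /= iF.
rewrite cardsD cardsX (setIidPr DX) card_imset; last by move=> i j [].
by rewrite -subn1 mulnBr muln1.
Qed.

Lemma tr_rho2X (F : fieldType) n (p : 'S_n) k :
  \tr (rho2 F p ^+ k) = (nfix p setT k * (nfix p setT k).-1)%N%:R.
Proof.
rewrite -rho2X tr_rho2 card_fixed_dpairs.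
suff -> : #|[set i | (p ^+ k)%g i == i]| = nfix p setT k by [].
by rewrite /nfix setTI; apply: eq_card => i; rewrite !inE permX.
Qed.

Lemma Cplx_natr_inj a b : (a%:R : Cplx) = b%:R -> a = b.
Proof. by move=> /eqP; rewrite (eqr_nat (Rdefinitions.R)[i]) => /eqP. Qed.

Theorem mainTheorem10 (n : nat) (hn : (2 <= n)%N) (sigma tau : 'S_n) :
  mx_similar (rho2 Cplx sigma) (rho2 Cplx tau) ->
  exists g : 'S_n, tau = (sigma ^ g)%g.
Proof.
move=> sim; apply: conj_of_nfix; apply: nfix_eq_of_pairs.
  by rewrite card_ord.
move=> k; apply: Cplx_natr_inj; rewrite -!tr_rho2X.
exact: mx_similar_trace (mx_similarX k sim).
Qed.
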